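(* Let $r \ge s \ge 2$ be integers. Then $$\mathrm{gp_e}(P_r \,\square\, P_s) = \begin{cases} r+2, & s = 2,\\ 2r, & s = 3,\\ 2r+2s-8, & s \ge 4.\end{cases}$$
   Context: $P_n$ denotes the path on $n$ vertices. The Cartesian product $G \,\square\, H$ has vertex set $V(G)\times V(H)$, with $(g,h)$ adjacent to $(g',h')$ iff either $gg' \in E(G)$ and $h = h'$, or $g = g'$ and $hh' \in E(H)$. A set $S$ of edges of a graph $G$ is an edge general position set if no geodesic (shortest path) of $G$ contains three edges of $S$; $\mathrm{gp_e}(G)$ is the maximum cardinality of an edge general position set of $G$. *)

From mathcomp Require Import all_boot all_order.
Set Implicit Arguments. Unset Strict Implicit. Unset Printing Implicit Defensive.

Definition path_adj (n : nat) : rel 'I_n :=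
  fun i j => (i.+1 == j) || (j.+1 == i).

Definition cart_adj (T U : finType) (g : rel T) (h : rel U) : rel (T * U) :=
  fun x y => (g x.1 y.1 && (x.2 == y.2)) || ((x.1 == y.1) && h x.2 y.2).

Section Graph.
Variables (T : finType) (g : rel T).

Definition is_edge (E : {set T}) : Prop := exists x y, g x y /\ E = [set x; y].

Definition geodesic (x : T) (p : seq T) : Prop :=
  path g x p /\
  forall q, path g x q -> last x q = last x p -> size p <= size q.

Definition walk_edges (x : T) (p : seq T) : seq {set T} :=
  pairmap (fun a b => [set a; b]) x p.

Definition edge_gp_set (S : {set {set T}}) : Prop :=
  (forall E, E \in S -> is_edge E) /\
  forall x p, geodesic x p -> #|[set E in S | E \in walk_edges x p]| < 3.

Definition gpe_number (k : nat) : Prop :=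
  (exists S, edge_gp_set S /\ #|S| = k) /\
  (forall S, edge_gp_set S -> #|S| <= k).

End Graph.

From mathcomp Require Import all_boot all_order zify.
Set Implicit Arguments. Unset Strict Implicit. Unset Printing Implicit Defensive.

(* In the grid P_r □ P_s the distance is the l1 distance, so geodesics are exactly the
   walks that are monotone in both coordinates.  Hence a set S of edges is in edge
   general position iff no three of its edges can be listed as p0p1, p2p3, p4p5 with
   p0, ..., p5 monotone in both coordinates.
   For the lower bounds this is checked directly on explicit sets: for s = 2 all
   vertical edges and the two horizontal edges leaving the first column, for s = 3 all
   vertical edges, and for s >= 4 the horizontal edges at both ends of the inner rows
   together with the vertical edges at both ends of the inner columns.
   For the upper bound, split S into horizontal and vertical edges.  A row carries at
   most two horizontal edges of S.  If some row carries two, every vertical edge of S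
   lies in a column strictly between them, so the first and last columns carry none,
   and the row just beyond any vertical edge (seen from that row) carries no
   horizontal edge.  Together with the same statements for columns, obtained by
   transposing the grid, counting row by row and column by column gives the bound. *)

(* Vertices are typed through the finType structure, as in [geodesic] and
   [edge_gp_set], so that [lia] sees the same atoms in our statements and in
   hypotheses unfolded from those definitions. *)
Notation vertex r s := ((('I_r * 'I_s)%type : finType) : Type).
Notation grid r s := (cart_adj (@path_adj r) (@path_adj s)).

Definition distn (a b : nat) := (a - b) + (b - a).

Definition monotone (l : seq nat) := sorted leq l || sorted geq l.

Lemma distn6_le a0 a1 a2 a3 a4 a5 :
  distn a0 a5 <= distn a0 a1 + distn a1 a2 + distn a2 a3 + distn a3 a4 + distn a4 a5.
Proof. rewrite /distn; lia. Qed.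

Lemma monotone6_distn a0 a1 a2 a3 a4 a5 :
  monotone [:: a0; a1; a2; a3; a4; a5] <->
  distn a0 a5 = distn a0 a1 + distn a1 a2 + distn a2 a3 + distn a3 a4 + distn a4 a5.
Proof. rewrite /monotone /distn /=; split; lia. Qed.

Lemma set2_eq (T : finType) (a b c d : T) :
  [set a; b] = [set c; d] -> (a = c /\ b = d) \/ (a = d /\ b = c).
Proof.
move=> E; have : c \in [set a; b] by rewrite E set21.
have : d \in [set a; b] by rewrite E set22.
have : a \in [set c; d] by rewrite -E set21.
have : b \in [set c; d] by rewrite -E set22.
by rewrite !inE => /orP[]/eqP e1 /orP[]/eqP e2 /orP[]/eqP e3 /orP[]/eqP e4; subst; tauto.
Qed.

Lemma nth_walk_edges (T : finType) (x : T) p i : i < size p ->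
  nth set0 (walk_edges x p) i = [set nth x (x :: p) i; nth x (x :: p) i.+1].
Proof. by move=> ip; rewrite /walk_edges (nth_pairmap x). Qed.

Lemma walk_edges_cons (T : finType) (x y : T) p :
  walk_edges x (y :: p) = [set x; y] :: walk_edges y p.
Proof. by []. Qed.

Lemma walk_edges_cat (T : finType) (x : T) p1 p2 :
  walk_edges x (p1 ++ p2) = walk_edges x p1 ++ walk_edges (last x p1) p2.
Proof. exact: pairmap_cat. Qed.

Lemma card_gt1_ltn (T : finType) (A : {set T}) (f : T -> nat) :
  {in A &, injective f} -> 1 < #|A| -> exists a b, [/\ a \in A, b \in A & f a < f b].
Proof.
move=> f_inj /card_gt1P[a [b [aA bA]]]; case: (ltngtP (f a) (f b)) => [ab|ba|e].
- by exists a, b.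
- by exists b, a.
- by rewrite (f_inj a b) ?eqxx.
Qed.

Lemma card_gt2_ltn (T : finType) (A : {set T}) (f : T -> nat) :
  {in A &, injective f} -> 2 < #|A| ->
  exists a b c, [/\ a \in A, b \in A, c \in A, f a < f b & f b < f c].
Proof.
move=> f_inj /card_gt2P[a [b [c [[aA bA cA] [ab bc ca]]]]].
have neq x y : x \in A -> y \in A -> x != y -> f x != f y.
  by move=> xA yA; apply: contraNneq => /f_inj->.
have {ab}fab := neq _ _ aA bA ab; have {bc}fbc := neq _ _ bA cA bc.
have {ca}fca := neq _ _ cA aA ca.
wlog lt_ab : a b c aA bA cA fab fbc fca / f a < f b.
  move=> W; case: (ltngtP (f a) (f b)) => [ab|ba|e]; first exact: (W a b c).
    by apply: (W b a c); rewrite // eq_sym.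
  by rewrite e eqxx in fab.
case: (ltngtP (f b) (f c)) fbc => // [bc|cb] _; first by exists a, b, c.
case: (ltngtP (f a) (f c)) fca => // [ac|ca] _; first by exists a, c, b.
by exists c, a, b.
Qed.

Lemma card_ord_range n a b : b <= n -> #|[set i : 'I_n | a <= i < b]| = b - a.
Proof.
move=> bn; rewrite -sum1_card; under eq_bigl do rewrite inE.
rewrite -(big_ord_widen_cond _ (leq a) (fun _ => 1)) //.
by rewrite -[b - a]muln1 -sum_nat_const_nat big_geq_mkord.
Qed.

Lemma card_ord_lt n k : k <= n -> #|[set i : 'I_n | i < k]| = k.
Proof. by move=> kn; rewrite -[RHS]subn0 -(card_ord_range 0 kn). Qed.

Lemma card_ord_predT n : #|[set i : 'I_n | predT i]| = n.
Proof. by rewrite cardsT card_ord. Qed.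

Lemma card_ord_pair n a b : a < b < n ->
  #|[set i : 'I_n | (i == a :> nat) || (i == b :> nat)]| = 2.
Proof.
case/andP=> ab bn; have an := ltn_trans ab bn.
rewrite (_ : [set i | _] = [set Ordinal an; Ordinal bn]) ?cards2; last first.
  by apply/setP=> i; rewrite !inE -!(inj_eq val_inj).
by rewrite -(inj_eq val_inj) /= neq_ltn ab.
Qed.

Lemma card_sum_fibers (T U : finType) (A : {set T}) (f : T -> U) :
  #|A| = \sum_(u : U) #|[set x in A | f x == u]|.
Proof.
rewrite -sum1_card (partition_big f xpredT) //=; apply: eq_bigr => u _.
by rewrite -sum1_card; apply: eq_bigl => i; rewrite !inE.
Qed.

Lemma sum_le_support (I : finType) (F : I -> nat) m (Z : {set I}) :
  (forall i, F i <= m) -> (forall i, i \in Z -> F i = 0) -> \sum_i F i <= m * #|~: Z|.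
Proof.
move=> Fm FZ; rewrite (bigID (mem Z)) /= big1 ?add0n // mulnC -sum_nat_const.
rewrite [X in _ <= X](eq_bigl (fun i => i \notin Z)) => [|i]; last by rewrite inE.
exact: leq_sum.
Qed.

(** * Distances and geodesics in the grid *)

Section GridMetric.
Variables r s : nat.
Implicit Types (u v w x : vertex r s) (p q : seq (vertex r s)).

Definition grid_dist u v := distn u.1 v.1 + distn u.2 v.2.

Lemma grid_adjE u v : grid r s u v = (grid_dist u v == 1).
Proof.
case: u v => [a b] [c e]; rewrite /cart_adj /path_adj /grid_dist /distn /=.
by rewrite -!(inj_eq val_inj) /=; apply/idP/idP; lia.
Qed.

Lemma grid_dist0 u : grid_dist u u = 0.
Proof. rewrite /grid_dist /distn; lia. Qed.

Lemma grid_distC u v : grid_dist u v = grid_dist v u.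
Proof. rewrite /grid_dist /distn; lia. Qed.

Lemma grid_dist_triangle u v w : grid_dist u w <= grid_dist u v + grid_dist v w.
Proof. rewrite /grid_dist /distn; lia. Qed.

Lemma vertex_inj u v : u.1 = v.1 :> nat -> u.2 = v.2 :> nat -> u = v.
Proof. by case: u v => [a b] [c e] /= /ord_inj-> /ord_inj->. Qed.

Lemma grid_dist0_eq u v : grid_dist u v = 0 -> u = v.
Proof. by rewrite /grid_dist /distn => h; apply: vertex_inj; lia. Qed.

Lemma grid_path_dist_le x p : path (grid r s) x p -> grid_dist x (last x p) <= size p.
Proof.
elim: p x => [|y p IHp] x /=; first by rewrite grid_dist0.
case/andP; rewrite grid_adjE => /eqP dxy /IHp IHy.
by rewrite (leq_trans (grid_dist_triangle x y _)) // dxy add1n ltnS.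
Qed.

Definition step_towards n (i j : 'I_n) : 'I_n :=
  if i < j then insubd i i.+1 else if j < i then insubd i i.-1 else i.

Lemma step_towardsP n (i j : 'I_n) : i != j ->
  distn i (step_towards i j) = 1 /\ distn (step_towards i j) j = (distn i j).-1.
Proof.
rewrite /step_towards /distn -(inj_eq val_inj) /=.
case: ltngtP => // [ij|ji] _; rewrite val_insubd.
  by rewrite (leq_ltn_trans ij (ltn_ord j)); lia.
by rewrite (leq_ltn_trans (leq_pred i) (ltn_ord i)); lia.
Qed.

Lemma grid_staircase u v :
  exists p, [/\ path (grid r s) u p, last u p = v & size p = grid_dist u v].
Proof.
move: {2}(grid_dist u v) (erefl (grid_dist u v)) => n.
elim: n u => [|n IHn] u duv.
  by exists [::]; split => //=; apply/esym/grid_dist0_eq; rewrite grid_distC.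
have [w [duw dwv]] : exists w, grid_dist u w = 1 /\ grid_dist w v = n.
  case: (eqVneq u.1 v.1) => [e1|/step_towardsP[d1 d2]]; last first.
    by exists (step_towards u.1 v.1, u.2); move: duv d1 d2; rewrite /grid_dist /distn /=; lia.
  have /step_towardsP[d1 d2] : u.2 != v.2.
    by apply: contra_eqN duv => /eqP e2; rewrite /grid_dist e1 e2 /distn !subnn.
  by exists (u.1, step_towards u.2 v.2); move: duv d1 d2; rewrite /grid_dist e1 /distn /=; lia.
have [p [wp wpv sp]] := IHn w dwv.
by exists (w :: p); split; rewrite /= ?grid_adjE ?duw ?sp ?dwv.
Qed.

Lemma grid_geodesicE x p :
  geodesic (grid r s) x p <-> path (grid r s) x p /\ size p = grid_dist x (last x p).
Proof.
split=> [[xp minp]|[xp sp]].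
  have [q [xq qend sq]] := grid_staircase x (last x p).
  by split=> //; apply/eqP; rewrite eqn_leq grid_path_dist_le // andbT -sq minp.
by split=> // q xq qend; rewrite sp -qend grid_path_dist_le.
Qed.

Lemma grid_path_nth_dist x p i j : path (grid r s) x p -> i <= j <= size p ->
  grid_dist (nth x (x :: p) i) (nth x (x :: p) j) <= j - i.
Proof.
move=> xp; elim: j => [|j IHj] /andP[ij js].
  by move: ij; rewrite leqn0 => /eqP->; rewrite grid_dist0.
case: (ltngtP i j.+1) ij => // [ij _|<- _]; last by rewrite grid_dist0.
have /(pathP x)/(_ j js) := xp; rewrite grid_adjE => /eqP step.
have IHij : grid_dist (nth x (x :: p) i) (nth x (x :: p) j) <= j - i.
  by apply: IHj; rewrite -ltnS ij ltnW.
by rewrite (leq_trans (grid_dist_triangle _ (nth x (x :: p) j) _)) // step addn1 subSn // -ltnS.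
Qed.

Lemma geodesic_nth_dist x p i j : geodesic (grid r s) x p -> i <= j <= size p ->
  grid_dist (nth x (x :: p) i) (nth x (x :: p) j) = j - i.
Proof.
case/grid_geodesicE=> xp sp /andP[ij jp]; set v := nth x (x :: p).
have D k l : k <= l <= size p -> grid_dist (v k) (v l) <= l - k by apply: grid_path_nth_dist.
have vend : v (size p) = last x p by rewrite /v (last_nth x).
have D0p : grid_dist (v 0) (v (size p)) = size p by rewrite vend.
have := D 0 i; have := D i j; have := D j (size p).
have := grid_dist_triangle (v 0) (v i) (v j).
have := grid_dist_triangle (v 0) (v j) (v (size p)).
rewrite ij jp leqnn (leq_trans ij jp); lia.
Qed.

End GridMetric.

(** * Edge general position through monotone triples *)

Section MonotoneTriples.
Variables r s : nat.
Implicit Types (x : vertex r s) (p : seq (vertex r s)) (S : {set {set vertex r s}}).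

Definition grid_monotone (ps : seq (vertex r s)) :=
  monotone [seq nat_of_ord v.1 | v <- ps] && monotone [seq nat_of_ord v.2 | v <- ps].

Lemma grid_monotone_dist v0 v1 v2 v3 v4 v5 :
  grid_monotone [:: v0; v1; v2; v3; v4; v5] <->
  grid_dist v0 v5 = grid_dist v0 v1 + grid_dist v1 v2 + grid_dist v2 v3 +
                    grid_dist v3 v4 + grid_dist v4 v5.
Proof.
rewrite /grid_monotone /grid_dist /=; split.
  by case/andP=> /monotone6_distn-> /monotone6_distn->; lia.
have le1 := distn6_le v0.1 v1.1 v2.1 v3.1 v4.1 v5.1.
have le2 := distn6_le v0.2 v1.2 v2.2 v3.2 v4.2 v5.2.
by move=> e; apply/andP; split; apply/monotone6_distn; simpl in *; lia.
Qed.

Definition monotone_triple_free S :=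
  forall v0 v1 v2 v3 v4 v5, grid_monotone [:: v0; v1; v2; v3; v4; v5] ->
  [set v0; v1] \in S -> [set v2; v3] \in S -> [set v4; v5] \in S -> False.

Lemma monotone_triple_free_gp S : (forall E, E \in S -> is_edge (grid r s) E) ->
  monotone_triple_free S -> edge_gp_set (grid r s) S.
Proof.
move=> S_edges S_free; split=> // x p xp; rewrite ltnNge; apply/negP.
set A := [set E in S | E \in walk_edges x p]; pose idx E := index E (walk_edges x p).
have idxK E : E \in A ->
    E \in S /\ [set nth x (x :: p) (idx E); nth x (x :: p) (idx E).+1] = E.
  rewrite inE => /andP[ES Ep]; split=> //.
  by rewrite -nth_walk_edges ?nth_index // -(size_pairmap (fun a b => [set a; b]) x) index_mem.
have idx_inj : {in A &, injective idx}.
  by move=> E F /idxK[_ eE] /idxK[_ eF] e; rewrite -eE -eF e.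
have idx_lt E : E \in A -> idx E < size p.
  by rewrite inE => /andP[_]; rewrite -index_mem size_pairmap.
case/(card_gt2_ltn idx_inj)=> E [F [G [EA FA GA EF FG]]].
have [ES eE] := idxK E EA; have [FS eF] := idxK F FA; have [GS eG] := idxK G GA.
rewrite -eE -eF -eG in ES FS GS; apply: S_free ES FS GS; apply/grid_monotone_dist.
have Gp := idx_lt G GA.
rewrite !(geodesic_nth_dist xp); try (apply/andP; split); simpl in *; lia.
Qed.

Lemma gp_monotone_triple_free S : edge_gp_set (grid r s) S -> monotone_triple_free S.
Proof.
case=> S_edges S_gp v0 v1 v2 v3 v4 v5 mono e01 e23 e45.
have unit a b : [set a; b] \in S -> grid_dist a b = 1.
  case/S_edges=> [a' [b' [ab' /set2_eq[][-> ->]]]]; move: ab'; rewrite grid_adjE => /eqP //.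
  by rewrite grid_distC.
have d01 := unit _ _ e01; have d23 := unit _ _ e23; have d45 := unit _ _ e45.
have [q1 [q1p q1end q1s]] := grid_staircase v1 v2.
have [q2 [q2p q2end q2s]] := grid_staircase v3 v4.
pose w := v1 :: q1 ++ v3 :: q2 ++ [:: v5].
have w_geo : geodesic (grid r s) v0 w.
  apply/grid_geodesicE; split.
    rewrite /= grid_adjE d01 cat_path q1p /= q1end grid_adjE d23 /=.
    by rewrite cat_path q2p /= q2end grid_adjE d45.
  rewrite /w /= last_cat /= last_cat size_cat /= size_cat q1s q2s /=.
  by move/grid_monotone_dist: mono; rewrite d01 d23 d45; lia.
have := S_gp _ _ w_geo; rewrite ltnNge => /negP; apply; apply/card_gt2P.
exists [set v0; v1], [set v2; v3], [set v4; v5]; split.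
  rewrite /w !(walk_edges_cons, walk_edges_cat) q1end q2end !inE e01 e23 e45.
  by rewrite !(mem_cat, inE) !eqxx !orbT.
move: mono d01 d23 d45; rewrite /grid_monotone /monotone /grid_dist /distn /=.
by split; apply/eqP=> /set2_eq[][e e']; subst; simpl in *; lia.
Qed.

End MonotoneTriples.

Ltac grid_monotone_lia := rewrite /grid_monotone /monotone /=; simpl in *; lia.

Section GridEdges.
Variables r s : nat.
Implicit Types (u v : vertex r s) (H V : {set vertex r s}) (S : {set {set vertex r s}}).

(* At the border of the grid these return [v] itself. *)
Definition right_nb v : vertex r s := (insubd v.1 v.1.+1, v.2).
Definition up_nb v : vertex r s := (v.1, insubd v.2 v.2.+1).

Lemma right_nb_fst v : v.1.+1 < r -> (right_nb v).1 = v.1.+1 :> nat.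
Proof. by move=> vr; rewrite /right_nb /= val_insubd vr. Qed.

Lemma up_nb_snd v : v.2.+1 < s -> (up_nb v).2 = v.2.+1 :> nat.
Proof. by move=> vs; rewrite /up_nb /= val_insubd vs. Qed.

Definition grid_edge_set H V : {set {set vertex r s}} :=
  [set [set v; right_nb v] | v in H] :|: [set [set v; up_nb v] | v in V].

Definition hor_left S := [set v : vertex r s | (v.1.+1 < r) && ([set v; right_nb v] \in S)].
Definition ver_low S := [set v : vertex r s | (v.2.+1 < s) && ([set v; up_nb v] \in S)].

Definition hrow S (y : 'I_s) := [set v in hor_left S | v.2 == y].
Definition vcol S (x : 'I_r) := [set v in ver_low S | v.1 == x].

Definition double_row S := [exists y, 1 < #|hrow S y|].
Definition double_col S := [exists x, 1 < #|vcol S x|].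

Section Bounded.
Variables H V : {set vertex r s}.
Hypotheses (H_lt : forall v, v \in H -> v.1.+1 < r) (V_lt : forall v, v \in V -> v.2.+1 < s).

Lemma mem_grid_edge_set u v : [set u; v] \in grid_edge_set H V ->
  (u.2 = v.2 :> nat /\ (u \in H /\ v.1 = u.1.+1 :> nat \/ v \in H /\ u.1 = v.1.+1 :> nat)) \/
  (u.1 = v.1 :> nat /\ (u \in V /\ v.2 = u.2.+1 :> nat \/ v \in V /\ u.2 = v.2.+1 :> nat)).
Proof.
rewrite inE => /orP[]/imsetP[w wHV /set2_eq[][-> ->]].
- by left; split; [|left; rewrite right_nb_fst ?H_lt].
- by left; split; [|right; rewrite right_nb_fst ?H_lt].
- by right; split; [|left; rewrite up_nb_snd ?V_lt].
- by right; split; [|right; rewrite up_nb_snd ?V_lt].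
Qed.

Lemma grid_edge_set_edges E : E \in grid_edge_set H V -> is_edge (grid r s) E.
Proof.
rewrite inE => /orP[]/imsetP[v vHV ->]; exists v.
- exists (right_nb v); split=> //.
  by rewrite grid_adjE /grid_dist right_nb_fst ?H_lt //= /distn; lia.
- exists (up_nb v); split=> //.
  by rewrite grid_adjE /grid_dist up_nb_snd ?V_lt //= /distn; lia.
Qed.

Lemma card_grid_edge_set : #|grid_edge_set H V| = #|H| + #|V|.
Proof.
have coord (a b c d : vertex r s) : [set a; b] = [set c; d] ->
    (a.1 = c.1 :> nat /\ a.2 = c.2 :> nat /\ b.1 = d.1 :> nat /\ b.2 = d.2 :> nat) \/
    (a.1 = d.1 :> nat /\ a.2 = d.2 :> nat /\ b.1 = c.1 :> nat /\ b.2 = c.2 :> nat).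
  by case/set2_eq=> [][-> ->]; tauto.
rewrite cardsU.
have -> : [set [set v; right_nb v] | v in H] :&: [set [set v; up_nb v] | v in V] = set0.
  apply/setP=> E; rewrite !inE; apply/negP=> /andP[/imsetP[u uH ->] /imsetP[v vV /coord]].
  by rewrite right_nb_fst ?up_nb_snd ?H_lt ?V_lt //=; lia.
rewrite cards0 subn0 !card_in_imset // => u v uX vX /coord;
by rewrite ?right_nb_fst ?up_nb_snd ?H_lt ?V_lt //= => c;
  apply: vertex_inj; simpl in *; lia.
Qed.

End Bounded.

Lemma hor_left_lt S v : v \in hor_left S -> v.1.+1 < r.
Proof. by rewrite inE => /andP[]. Qed.

Lemma ver_low_lt S v : v \in ver_low S -> v.2.+1 < s.
Proof. by rewrite inE => /andP[]. Qed.

Lemma grid_edge_set_decomp S : (forall E, E \in S -> is_edge (grid r s) E) ->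
  S = grid_edge_set (hor_left S) (ver_low S).
Proof.
move=> S_edges; apply/setP=> E; apply/idP/idP; last first.
  by rewrite inE => /orP[]/imsetP[v + ->]; rewrite inE => /andP[].
have hor u v : v.1 = u.1.+1 :> nat -> u.2 = v.2 :> nat -> [set u; v] \in S ->
    [set u; v] \in grid_edge_set (hor_left S) (ver_low S).
  move=> uv1 uv2; have ur : u.1.+1 < r by rewrite -uv1.
  have -> : v = right_nb u by apply: vertex_inj; rewrite ?right_nb_fst.
  by move=> uvS; apply/setUP; left; apply/imsetP; exists u; rewrite // inE ur.
have ver u v : u.1 = v.1 :> nat -> v.2 = u.2.+1 :> nat -> [set u; v] \in S ->
    [set u; v] \in grid_edge_set (hor_left S) (ver_low S).
  move=> uv1 uv2; have us : u.2.+1 < s by rewrite -uv2.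
  have -> : v = up_nb u by apply: vertex_inj; rewrite ?up_nb_snd.
  by move=> uvS; apply/setUP; right; apply/imsetP; exists u; rewrite // inE us.
move=> ES; have [u [v [+ eE]]] := S_edges E ES; rewrite eE in ES *.
rewrite grid_adjE /grid_dist /distn => /eqP uv.
have [[e1 e2]|[[e1 e2]|[[e1 e2]|[e1 e2]]]] :
    v.1 = u.1.+1 :> nat /\ u.2 = v.2 :> nat \/ u.1 = v.1.+1 :> nat /\ v.2 = u.2 :> nat \/
    u.1 = v.1 :> nat /\ v.2 = u.2.+1 :> nat \/ v.1 = u.1 :> nat /\ u.2 = v.2.+1 :> nat.
  by simpl in *; lia.
- exact: hor.
- by rewrite setUC in ES *; apply: hor.
- exact: ver.
- by rewrite setUC in ES *; apply: ver.
Qed.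

End GridEdges.

(** * Lower bounds *)

Definition grid_rect r s (A B : pred nat) : {set vertex r s} :=
  [set v : vertex r s | A v.1 & B v.2].

Lemma card_grid_rect r s (A B : pred nat) :
  #|grid_rect r s A B| = #|[set i : 'I_r | A i]| * #|[set j : 'I_s | B j]|.
Proof. by rewrite -cardsX; apply: eq_card => v; rewrite !inE. Qed.

Lemma exists_edge_gp_set_s2 r : 2 <= r ->
  exists S, edge_gp_set (grid r 2) S /\ #|S| = r + 2.
Proof.
move=> r2; pose H := grid_rect r 2 (fun x => x < 1) predT.
pose V := grid_rect r 2 predT (fun y => y < 1).
have H_lt v : v \in H -> v.1.+1 < r by rewrite inE; lia.
have V_lt v : v \in V -> v.2.+1 < 2 by rewrite inE; lia.
exists (grid_edge_set H V); split.
  apply: monotone_triple_free_gp; first exact: grid_edge_set_edges.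
  move=> v0 v1 v2 v3 v4 v5 + /(mem_grid_edge_set H_lt V_lt) e01
    /(mem_grid_edge_set H_lt V_lt) e23 /(mem_grid_edge_set H_lt V_lt) e45.
  rewrite !inE in e01 e23 e45; grid_monotone_lia.
by rewrite card_grid_edge_set // !card_grid_rect !card_ord_lt ?card_ord_predT //; lia.
Qed.

Lemma exists_edge_gp_set_s3 r : 3 <= r ->
  exists S, edge_gp_set (grid r 3) S /\ #|S| = 2 * r.
Proof.
move=> r3; pose V := grid_rect r 3 predT (fun y => y < 2).
have H_lt (v : vertex r 3) : v \in set0 -> v.1.+1 < r by rewrite inE.
have V_lt v : v \in V -> v.2.+1 < 3 by rewrite inE; lia.
exists (grid_edge_set set0 V); split.
  apply: monotone_triple_free_gp; first exact: grid_edge_set_edges.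
  move=> v0 v1 v2 v3 v4 v5 + /(mem_grid_edge_set H_lt V_lt) e01
    /(mem_grid_edge_set H_lt V_lt) e23 /(mem_grid_edge_set H_lt V_lt) e45.
  rewrite !inE in e01 e23 e45; grid_monotone_lia.
by rewrite card_grid_edge_set // cards0 card_grid_rect card_ord_lt ?card_ord_predT //; lia.
Qed.

Lemma exists_edge_gp_set_s4 r s : 4 <= s -> s <= r ->
  exists S, edge_gp_set (grid r s) S /\ #|S| = 2 * r + 2 * s - 8.
Proof.
move=> s4 sr.
pose H := grid_rect r s (fun x => (x == 0) || (x == r - 2)) (fun y => 0 < y < s - 1).
pose V := grid_rect r s (fun x => 0 < x < r - 1) (fun y => (y == 0) || (y == s - 2)).
have H_lt v : v \in H -> v.1.+1 < r by rewrite inE; lia.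
have V_lt v : v \in V -> v.2.+1 < s by rewrite inE; lia.
exists (grid_edge_set H V); split.
  apply: monotone_triple_free_gp; first exact: grid_edge_set_edges.
  move=> v0 v1 v2 v3 v4 v5 + /(mem_grid_edge_set H_lt V_lt) e01
    /(mem_grid_edge_set H_lt V_lt) e23 /(mem_grid_edge_set H_lt V_lt) e45.
  rewrite !inE in e01 e23 e45; grid_monotone_lia.
rewrite card_grid_edge_set // !card_grid_rect !card_ord_pair ?card_ord_range; lia.
Qed.

(** * Upper bound *)

Section Transpose.
Variables r s : nat.
Implicit Types (S : {set {set vertex r s}}).

Definition transpose_edges S : {set {set vertex s r}} :=
  [set swap_pair @: (E : {set vertex r s}) | E in S].

Lemma mem_transpose_edges S (E : {set vertex s r}) :
  (E \in transpose_edges S) = (swap_pair @: E \in S).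
Proof.
rewrite -{1}[E]imset_id -(eq_imset _ (@swap_pairK _ _)) imset_comp.
by rewrite mem_imset //; apply/imset_inj/(can_inj swap_pairK).
Qed.

Lemma transpose_edges_free S :
  monotone_triple_free S -> monotone_triple_free (transpose_edges S).
Proof.
move=> S_free v0 v1 v2 v3 v4 v5 mono; rewrite !mem_transpose_edges !imsetU1 !imset_set1.
by apply: S_free; move: mono; rewrite /grid_monotone /= andbC.
Qed.

Lemma hor_left_transpose S : hor_left (transpose_edges S) = swap_pair @: ver_low S.
Proof.
apply/setP=> v; rewrite (can2_imset_pre _ swap_pairK swap_pairK) !inE.
by rewrite mem_transpose_edges imsetU1 imset_set1.
Qed.

Lemma ver_low_transpose S : ver_low (transpose_edges S) = swap_pair @: hor_left S.
Proof.
apply/setP=> v; rewrite (can2_imset_pre _ swap_pairK swap_pairK) !inE.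
by rewrite mem_transpose_edges imsetU1 imset_set1.
Qed.

Lemma card_hor_left_transpose S : #|hor_left (transpose_edges S)| = #|ver_low S|.
Proof. by rewrite hor_left_transpose card_imset //; apply: can_inj swap_pairK. Qed.

Lemma card_ver_low_transpose S : #|ver_low (transpose_edges S)| = #|hor_left S|.
Proof. by rewrite ver_low_transpose card_imset //; apply: can_inj swap_pairK. Qed.

Lemma card_hrow_transpose S x : #|hrow (transpose_edges S) x| = #|vcol S x|.
Proof.
rewrite /hrow hor_left_transpose -(card_imset _ (can_inj swap_pairK)).
by apply: eq_card => v; rewrite !(can2_imset_pre _ swap_pairK swap_pairK) !inE swap_pairK.
Qed.

Lemma card_vcol_transpose S y : #|vcol (transpose_edges S) y| = #|hrow S y|.
Proof.
rewrite /vcol ver_low_transpose -(card_imset _ (can_inj swap_pairK)).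
by apply: eq_card => v; rewrite !(can2_imset_pre _ swap_pairK swap_pairK) !inE swap_pairK.
Qed.

Lemma double_row_transpose S : double_row (transpose_edges S) = double_col S.
Proof. by apply: eq_existsb => x; rewrite card_hrow_transpose. Qed.

Lemma double_col_transpose S : double_col (transpose_edges S) = double_row S.
Proof. by apply: eq_existsb => y; rewrite card_vcol_transpose. Qed.

End Transpose.

Section DoubleRow.
Variables (r s : nat) (S : {set {set vertex r s}}).
Hypothesis S_free : monotone_triple_free S.
Implicit Types (x : 'I_r) (y : 'I_s).

Lemma hor_left_edge v : v \in hor_left S ->
  [/\ [set v; right_nb v] \in S, [set right_nb v; v] \in S,
      (right_nb v).1 = v.1.+1 :> nat & (right_nb v).2 = v.2].
Proof. by rewrite inE => /andP[vr vS]; split=> //; [rewrite setUC | exact: right_nb_fst]. Qed.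

Lemma ver_low_edge v : v \in ver_low S ->
  [/\ [set v; up_nb v] \in S, [set up_nb v; v] \in S,
      (up_nb v).1 = v.1 & (up_nb v).2 = v.2.+1 :> nat].
Proof. by rewrite inE => /andP[vs vS]; split=> //; [rewrite setUC | exact: up_nb_snd]. Qed.

Lemma mem_hrow y v : (v \in hrow S y) = (v \in hor_left S) && (v.2 == y :> nat).
Proof. by rewrite in_set. Qed.

Lemma mem_vcol x v : (v \in vcol S x) = (v \in ver_low S) && (v.1 == x :> nat).
Proof. by rewrite in_set. Qed.

Lemma hrow_inj y : {in hrow S y &, injective (fun v : vertex r s => nat_of_ord v.1)}.
Proof.
move=> v w; rewrite !mem_hrow => /andP[_ /eqP vy] /andP[_ /eqP wy] vw.
by apply: vertex_inj; rewrite // vy wy.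
Qed.

Lemma card_hrow_le2 y : #|hrow S y| <= 2.
Proof.
rewrite leqNgt; apply/negP => /(card_gt2_ltn (@hrow_inj y))[u1 [u2 [u3 []]]].
rewrite !mem_hrow => /andP[/hor_left_edge[e1 _ x1 y1] /eqP z1]
  /andP[/hor_left_edge[e2 _ x2 y2] /eqP z2] /andP[/hor_left_edge[e3 _ x3 y3] /eqP z3] l12 l23.
by move: e1 e2 e3; apply: S_free; grid_monotone_lia.
Qed.

Lemma double_rowP : double_row S ->
  exists u1 u2, [/\ u1 \in hor_left S, u2 \in hor_left S, u1.2 = u2.2 :> nat & u1.1 < u2.1].
Proof.
case/existsP=> y /(card_gt1_ltn (@hrow_inj y))[u1 [u2 []]].
rewrite !mem_hrow => /andP[u1H /eqP z1] /andP[u2H /eqP z2] l12.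
by exists u1, u2; rewrite z1 z2.
Qed.

Lemma ver_low_between u1 u2 f : u1 \in hor_left S -> u2 \in hor_left S ->
  u1.2 = u2.2 :> nat -> u1.1 < u2.1 -> f \in ver_low S -> u1.1 < f.1 <= u2.1.
Proof.
move=> /hor_left_edge[e1 _ x1 y1] /hor_left_edge[e2 _ x2 y2] z12 l12
  /ver_low_edge[ef ef' xf yf].
apply/andP; split; [rewrite ltnNge | rewrite leqNgt]; apply/negP=> lf;
  case: (ltnP f.2 u1.2) => lf'.
- by move: ef e1 e2; apply: S_free; grid_monotone_lia.
- by move: ef' e1 e2; apply: S_free; grid_monotone_lia.
- by move: e1 e2 ef'; apply: S_free; grid_monotone_lia.
- by move: e1 e2 ef; apply: S_free; grid_monotone_lia.
Qed.

Lemma double_row_end_col x : double_row S -> (x == 0 :> nat) || (x.+1 == r) ->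
  #|vcol S x| = 0.
Proof.
case/double_rowP=> u1 [u2 [u1H u2H z12 l12]] xend; apply: eq_card0 => f.
rewrite mem_vcol; apply/negbTE/negP=> /andP[/(ver_low_between u1H u2H z12 l12) + /eqP fx].
by rewrite fx; have := hor_left_lt u2H; lia.
Qed.

Lemma double_row_empty_row : double_row S -> 0 < #|ver_low S| -> exists y, #|hrow S y| = 0.
Proof.
case/double_rowP=> u1 [u2 [u1H u2H z12 l12]] /card_gt0P[f fV].
have /andP[l1f lf2] := ver_low_between u1H u2H z12 l12 fV.
have [e1 _ x1 y1] := hor_left_edge u1H; have [e2 _ x2 y2] := hor_left_edge u2H.
have [ef ef' xf yf] := ver_low_edge fV.
(* the row on the far side of [f], seen from the row of [u1] and [u2] *)
exists (if u1.2 <= f.2 then (up_nb f).2 else f.2); apply: eq_card0 => g.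
rewrite mem_hrow; apply/negbTE/negP=> /andP[/hor_left_edge[eg _ xg yg] /eqP zg].
case: (leqP u1.2 f.2) zg => lf zg; case: (ltnP g.1 f.1) => lg.
- by move: eg ef' e2; apply: S_free; grid_monotone_lia.
- by move: e1 ef eg; apply: S_free; grid_monotone_lia.
- by move: eg ef e2; apply: S_free; grid_monotone_lia.
- by move: e1 ef' eg; apply: S_free; grid_monotone_lia.
Qed.

Lemma card_vcol_le1 x : s <= 2 -> #|vcol S x| <= 1.
Proof.
move=> s2; rewrite leqNgt; apply/negP=> /card_gt1P[f [g []]].
rewrite !mem_vcol => /andP[/ver_low_lt fs /eqP fx] /andP[/ver_low_lt gs /eqP gx] /eqP[].
by apply: vertex_inj; rewrite ?fx ?gx //; lia.
Qed.

End DoubleRow.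

Lemma card_hor_left_le r s (S : {set {set vertex r s}}) : monotone_triple_free S -> 1 < s ->
  [/\ #|hor_left S| <= (if double_row S then 2 else 1) * s,
      double_col S -> #|hor_left S| <= (if double_row S then 2 else 1) * (s - 2) &
      double_row S -> 0 < #|ver_low S| -> #|hor_left S| <= 2 * (s - 1)].
Proof.
move=> S_free s1; set m := if double_row S then 2 else 1.
have hrow_m y : #|hrow S y| <= m.
  rewrite /m; case: ifPn => [_|]; first exact: card_hrow_le2.
  by rewrite negb_exists => /forallP/(_ y); rewrite -leqNgt.
have card_le (Z : {set 'I_s}) :
    (forall y, y \in Z -> #|hrow S y| = 0) -> #|hor_left S| <= m * (s - #|Z|).
  move=> Z0; rewrite (card_sum_fibers _ snd) -[s in s - _]card_ord -(cardsC Z) addKn.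
  exact: sum_le_support.
split.
- by have := card_le set0; rewrite cards0 subn0; apply=> y; rewrite inE.
- rewrite -double_row_transpose => dc.
  have := card_le [set y : 'I_s | (y == 0 :> nat) || (y == s.-1 :> nat)].
  rewrite card_ord_pair; last by rewrite -subn1; lia.
  apply=> y; rewrite inE -card_vcol_transpose => yend.
  by apply: (double_row_end_col (@transpose_edges_free _ _ _ S_free) dc); move: yend; lia.
- move=> dr /(double_row_empty_row S_free dr)[y0 y00].
  by have := card_le [set y0]; rewrite cards1 /m dr; apply=> y; rewrite inE => /eqP->.
Qed.

Lemma card_ver_low_le r s (S : {set {set vertex r s}}) : monotone_triple_free S -> 1 < r ->
  [/\ #|ver_low S| <= (if double_col S then 2 else 1) * r,
      double_row S -> #|ver_low S| <= (if double_col S then 2 else 1) * (r - 2) &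
      double_col S -> 0 < #|hor_left S| -> #|ver_low S| <= 2 * (r - 1)].
Proof.
move=> S_free r1; have := card_hor_left_le (@transpose_edges_free _ _ _ S_free) r1.
by rewrite card_hor_left_transpose card_ver_low_transpose double_row_transpose
  double_col_transpose.
Qed.

Lemma card_edge_gp_set_le r s (S : {set {set vertex r s}}) : 2 <= s -> s <= r ->
  edge_gp_set (grid r s) S ->
  #|S| <= (if s == 2 then r + 2 else if s == 3 then 2 * r else 2 * r + 2 * s - 8).
Proof.
move=> s2 sr S_gp; have S_free := gp_monotone_triple_free S_gp.
rewrite (grid_edge_set_decomp S_gp.1) card_grid_edge_set; [|exact: hor_left_lt|exact: ver_low_lt].
have [h1 h2 h3] := card_hor_left_le S_free s2.
have [v1 v2 v3] := card_ver_low_le S_free (leq_trans s2 sr).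
have no_double_col : s = 2 -> ~~ double_col S.
  by move=> e; rewrite negb_exists; apply/forallP=> x; rewrite -leqNgt card_vcol_le1 // e.
move: h1 h2 h3 v1 v2 v3 no_double_col; set a := #|hor_left S|; set b := #|ver_low S|.
case: (double_row S); case: (double_col S) => /=;
case: eqP => [e2|n2]; try case: eqP => [e3|n3]; lia.
Qed.

Theorem theorem4p1 (r s : nat) (hs : 2 <= s) (hrs : s <= r) :
  gpe_number (cart_adj (@path_adj r) (@path_adj s))
    (if s == 2 then r + 2
     else if s == 3 then 2 * r
     else 2 * r + 2 * s - 8).
Proof.
split=> [|S S_gp]; last exact: card_edge_gp_set_le.
case: eqP => [s2|s2]; first by subst s; apply: exists_edge_gp_set_s2.
case: eqP => [s3|s3]; first by subst s; apply: exists_edge_gp_set_s3.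
by apply: exists_edge_gp_set_s4; lia.
Qed.
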